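(* The set of variables satisfying the KKT condition of the covariance selection problem is the set of all tuples $(\lambda ,S_k^\lambda ,F_k^\lambda ,P_k^\lambda )_{k = 0}^{N - 1}$ such that $\lambda>0$ and $C(\{ S_k^\lambda \} _{k = 0}^{N - 1} ) = \gamma$.
   Context: Consider the stochastic LTI system $x(k+1)=Ax(k)+Bu(k)+w(k)$ with $x(k)\in\mathbb R^n$, $u(k)\in\mathbb R^m$, $x(0)\sim\mathcal N(z,V)$, $w(k)\sim\mathcal N(0,W)$ mutually independent, and linear feedback $u(k)=F_kx(k)$, $k\in\{0,\dots,N-1\}$. With $S_k=\mathbb E([x(k);u(k)][x(k);u(k)]^T)$, the covariance selection problem is: minimize $J_p(\{S_k\})=\mathrm{Tr}\big(Q_f([A\ B]S_{N-1}[A\ B]^T+W)\big)+\sum_{k=0}^{N-1}\mathrm{Tr}(\mathrm{diag}(Q_k,R_k)S_k)$ over $\{S_k,F_k\}$ subject to $S_k=\Phi(F_k,S_{k-1})$ ($k=1,\dots,N-1$), $S_0=[I_n;F_0](V+zz^T)[I_n;F_0]^T$, and $C(\{S_k\})\le\gamma$, where $C(\{S_k\})=\mathrm{Tr}\big(\tilde Q_f([A\ B]S_{N-1}[A\ B]^T+W)\big)+\sum_{k=0}^{N-1}\mathrm{Tr}(\mathrm{diag}(\tilde Q_k,\tilde R_k)S_k)$ and $\Phi(F,S)=[I_n;F]([A\ B]S[A\ B]^T+W)[I_n;F]^T$. The KKT condition refers to the Lagrangian $L=J_p+\sum_{k=1}^{N-1}\mathrm{Tr}((\Phi(F_k,S_{k-1})-S_k)P_k)+\mathrm{Tr}(([I;F_0](V+zz^T)[I;F_0]^T-S_0)P_0)+\lambda(C(\{S_k\})-\gamma)$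 with multipliers $P_k\in\mathbb S^{n+m}$, $\lambda\ge0$: primal feasibility, complementary slackness $\lambda(C(\{S_k\})-\gamma)=0$, dual feasibility $\lambda\ge0$, and stationarity of $L$ in $(S_k,F_k)$. Assumptions: $Q_f,\tilde Q_f,Q_k,\tilde Q_k\succeq0$, $R_k+\lambda\tilde R_k\succ0$ for all $k$, $\lambda>0$; $V\succ0$, $W\succ0$; strict feasibility of the constraint. For $\lambda\ge0$, $X_N^\lambda=Q_f+\lambda\tilde Q_f$, $X_k^\lambda=A^TX_{k+1}^\lambda A-A^TX_{k+1}^\lambda B(R_k+\lambda\tilde R_k+B^TX_{k+1}^\lambda B)^{-1}B^TX_{k+1}^\lambda A+Q_k+\lambda\tilde Q_k$, $F_k^\lambda=-(R_k+\lambda\tilde R_k+B^TX_{k+1}^\lambda B)^{-1}B^TX_{k+1}^\lambda A$, $S_0^\lambda=[I;F_0^\lambda](V+zz^T)[I;F_0^\lambda]^T$, $S_k^\lambda=\Phi(F_k^\lambda,S_{k-1}^\lambda)$, and $P_k^\lambda=\begin{bmatrix}Q_k+\lambda\tilde Q_k+A^TX_{k+1}^\lambda A & A^TX_{k+1}^\lambda B\\ B^TX_{k+1}^\lambda A & R_k+\lambda\tilde R_k+B^TX_{k+1}^\lambda B\end{bmatrix}$. It was shown that for each fixed $\lambda$, $(S_k^\lambda,F_k^\lambda,P_k^\lambda)$ uniquely satisfy primal feasibility equalities and stationarity. Nontrivial-scenario assumption: $C(\{S_k^0\})>\gamma$. *)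

From HB Require Import structures.
From mathcomp Require Import all_boot all_order all_algebra.
From mathcomp Require Import all_classical all_reals all_analysis.
Set Implicit Arguments. Unset Strict Implicit. Unset Printing Implicit Defensive.
Import Order.TTheory GRing.Theory Num.Theory.
Import numFieldNormedType.Exports.
Local Open Scope ring_scope.

(* Data of the covariance selection problem. Time indices are natural numbers;
   only indices k < N are relevant. *)
Record problem (R : realType) (n m : nat) := Problem {
  pA : 'M[R]_n;
  pB : 'M[R]_(n, m);
  pW : 'M[R]_n;            (* covariance of w(k) *)
  pV : 'M[R]_n;            (* covariance of x(0) *)
  pz : 'cV[R]_n;           (* mean of x(0) *)
  pN : nat;
  pQ : nat -> 'M[R]_n;
  pR : nat -> 'M[R]_m;
  pQf : 'M[R]_n;
  pQt : nat -> 'M[R]_n;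
  pRt : nat -> 'M[R]_m;
  pQft : 'M[R]_n;
  pgamma : R
}.

Section Defs.
Variables (R : realType) (n m : nat).

Definition symmetric (k : nat) (M : 'M[R]_k) : Prop := M^T = M.
Definition psd (k : nat) (M : 'M[R]_k) : Prop :=
  M^T = M /\ forall x : 'cV[R]_k, 0 <= (x^T *m M *m x) 0 0.
Definition pd (k : nat) (M : 'M[R]_k) : Prop :=
  M^T = M /\ forall x : 'cV[R]_k, x != 0 -> 0 < (x^T *m M *m x) 0 0.

Variable p : problem R n m.

Definition AB : 'M[R]_(n, n + m) := row_mx (pA p) (pB p).
Definition IF (F : 'M[R]_(m, n)) : 'M[R]_(n + m, n) := col_mx 1%:M F.
Definition bdiag (Q : 'M[R]_n) (Rm : 'M[R]_m) : 'M[R]_(n + m) :=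
  block_mx Q 0 0 Rm.

Definition Phi (F : 'M[R]_(m, n)) (S : 'M[R]_(n + m)) : 'M[R]_(n + m) :=
  IF F *m (AB *m S *m AB^T + pW p) *m (IF F)^T.

Definition Sinit (F : 'M[R]_(m, n)) : 'M[R]_(n + m) :=
  IF F *m (pV p + pz p *m (pz p)^T) *m (IF F)^T.

Definition Jp (S : nat -> 'M[R]_(n + m)) : R :=
  \tr (pQf p *m (AB *m S (pN p).-1 *m AB^T + pW p))
  + \sum_(k < pN p) \tr (bdiag (pQ p k) (pR p k) *m S k).

Definition Ccost (S : nat -> 'M[R]_(n + m)) : R :=
  \tr (pQft p *m (AB *m S (pN p).-1 *m AB^T + pW p))
  + \sum_(k < pN p) \tr (bdiag (pQt p k) (pRt p k) *m S k).

Definition Lagr (lam : R) (P : nat -> 'M[R]_(n + m))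
    (S : nat -> 'M[R]_(n + m)) (F : nat -> 'M[R]_(m, n)) : R :=
  Jp S
  + \sum_(1 <= k < pN p) \tr ((Phi (F k) (S k.-1) - S k) *m P k)
  + \tr ((Sinit (F 0%N) - S 0%N) *m P 0%N)
  + lam * (Ccost S - pgamma p).

Definition upd (T : Type) (f : nat -> T) (j : nat) (y : T) : nat -> T :=
  fun k => if k == j then y else f k.

Fixpoint traj (F : nat -> 'M[R]_(m, n)) (k : nat) : 'M[R]_(n + m) :=
  match k with
  | 0 => Sinit (F 0%N)
  | k'.+1 => Phi (F k) (traj F k')
  end.

Definition KKT (lam : R) (S : nat -> 'M[R]_(n + m)) (F : nat -> 'M[R]_(m, n))
    (P : nat -> 'M[R]_(n + m)) : Prop :=
  (forall k, (k < pN p)%N -> symmetric (S k) /\ symmetric (P k)) /\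
  S 0%N = Sinit (F 0%N) /\
  (forall k, (1 <= k < pN p)%N -> S k = Phi (F k) (S k.-1)) /\
  Ccost S <= pgamma p /\
  lam * (Ccost S - pgamma p) = 0 /\
  0 <= lam /\
  (forall j, (j < pN p)%N -> forall D : 'M[R]_(n + m), symmetric D ->
     is_derive (0 : R) (1 : R)
       (fun t : R => Lagr lam P (upd S j (S j + t *: D)) F) 0) /\
  (forall j, (j < pN p)%N -> forall E : 'M[R]_(m, n),
     is_derive (0 : R) (1 : R)
       (fun t : R => Lagr lam P S (upd F j (F j + t *: E))) 0).

(* Riccati recursion: Xrec lam i = X^lam_{N-i} *)
Definition Ric_step (lam : R) (k : nat) (X : 'M[R]_n) : 'M[R]_n :=
  (pA p)^T *m X *m pA p
  - (pA p)^T *m X *m pB p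
      *m invmx (pR p k + lam *: pRt p k + (pB p)^T *m X *m pB p)
      *m (pB p)^T *m X *m pA p
  + pQ p k + lam *: pQt p k.

Fixpoint Xrec (lam : R) (i : nat) : 'M[R]_n :=
  match i with
  | 0 => pQf p + lam *: pQft p
  | i'.+1 => Ric_step lam (pN p - i) (Xrec lam i')
  end.

(* X^lam_k for k <= N *)
Definition Xlam (lam : R) (k : nat) : 'M[R]_n := Xrec lam (pN p - k).

Definition Flam (lam : R) (k : nat) : 'M[R]_(m, n) :=
  - (invmx (pR p k + lam *: pRt p k + (pB p)^T *m Xlam lam k.+1 *m pB p)
       *m (pB p)^T *m Xlam lam k.+1 *m pA p).

Definition Slam (lam : R) : nat -> 'M[R]_(n + m) := traj (Flam lam).

Definition Plam (lam : R) (k : nat) : 'M[R]_(n + m) :=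
  block_mx (pQ p k + lam *: pQt p k + (pA p)^T *m Xlam lam k.+1 *m pA p)
           ((pA p)^T *m Xlam lam k.+1 *m pB p)
           ((pB p)^T *m Xlam lam k.+1 *m pA p)
           (pR p k + lam *: pRt p k + (pB p)^T *m Xlam lam k.+1 *m pB p).

End Defs.

From Pilot Require Import Defs.
From HB Require Import structures.
From mathcomp Require Import all_boot all_order all_algebra.
From mathcomp Require Import all_classical all_reals all_analysis.
From mathcomp Require Import ring lra zify.
Set Implicit Arguments. Unset Strict Implicit. Unset Printing Implicit Defensive.
Import Order.TTheory GRing.Theory Num.Theory.
Import numFieldNormedType.Exports.
Local Open Scope ring_scope.

(* For fixed λ the Lagrangian is affine in each S_j and quadratic in each F_j.
   Stationarity in S_j says P_j = diag(Q_j + λQ~_j, R_j + λR~_j) + [A B]^T X [A B],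
   where X = [I;F_{j+1}]^T P_{j+1} [I;F_{j+1}] (X = Q_f + λQ~_f when j = N-1).
   Stationarity in F_j, once the positive definite covariance of x(j) is
   cancelled, says that the off-diagonal block of [I;F_j]^T P_j vanishes; this
   forces F_j to be the Riccati gain, and completing the square then gives
   [I;F_j]^T P_j [I;F_j] = X_j^λ.  Backward induction from j = N-1 identifies
   all P_j and F_j, primal feasibility identifies the S_j, and complementary
   slackness together with C({S_k^0}) > γ forces λ > 0 and C({S_k^λ}) = γ. *)

Section Trace.
Variable R : comPzRingType.

Lemma mxtraceN k (M : 'M[R]_k) : \tr (- M) = - \tr M.
Proof. exact: raddfN. Qed.

Lemma mxtrace_mul_conj k l (M : 'M[R]_k) (X : 'M[R]_(k, l)) (D : 'M[R]_l) :
  \tr (X^T *m M *m X *m D) = \tr (M *m (X *m D *m X^T)).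
Proof. by rewrite -!mulmxA mxtrace_mulC !mulmxA. Qed.

End Trace.

Lemma mxtrace_mul_tr_eq0 (R : realDomainType) k l (Y : 'M[R]_(k, l)) :
  \tr (Y *m Y^T) = 0 -> Y = 0.
Proof.
move=> trYY0.
have sqr_sum0 : \sum_(i < k) \sum_(j < l) Y i j ^+ 2 = 0.
  rewrite -[RHS]trYY0; apply: eq_bigr => i _; rewrite mxE.
  by apply: eq_bigr => j _; rewrite mxE expr2.
apply/matrixP => i j; rewrite [RHS]mxE.
have row0 : \sum_(j < l) Y i j ^+ 2 = 0.
  by apply: (psumr_eq0P _ sqr_sum0) => // i' _; apply: sumr_ge0 => j' _; apply: sqr_ge0.
have /eqP : Y i j ^+ 2 = 0 by apply: (psumr_eq0P _ row0) => // j' _; apply: sqr_ge0.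
by rewrite sqrf_eq0 => /eqP.
Qed.

Lemma is_derive0_quadratic (R : realType) (f : R -> R) (a b c : R) :
  (forall t, f t = a + t * b + t ^+ 2 * c) -> is_derive (0 : R) (1 : R) f 0 <-> b = 0.
Proof.
move=> fE; have f_derive : is_derive (0 : R) (1 : R) f b.
  have -> : f = (fun t => a + t * b + t * (t * c)).
    by apply/funext => t; rewrite fE expr2 mulrA.
  apply: is_derive_eq.
  by rewrite !scale0r mul0r !add0r mul1r scale0r addr0 [b%:A]mulr1.
split=> [[_ Df0] | b0]; last by move: f_derive; rewrite b0.
by case: f_derive => _ <-.
Qed.

Section Definite.
Variable R : realType.

Lemma psd_conj k l (M : 'M[R]_k) (X : 'M[R]_(k, l)) :
  psd M -> psd (X^T *m M *m X).
Proof.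
move=> [M_sym M_ge0]; split; first by rewrite !trmx_mul trmxK M_sym mulmxA.
by move=> x; have := M_ge0 (X *m x); rewrite !trmx_mul !mulmxA.
Qed.

Lemma psd_conjT k l (M : 'M[R]_k) (X : 'M[R]_(l, k)) :
  psd M -> psd (X *m M *m X^T).
Proof. by move/(psd_conj X^T); rewrite trmxK. Qed.

Lemma psd_mul_tr k l (Y : 'M[R]_(k, l)) : psd (Y *m Y^T).
Proof.
split; first by rewrite trmx_mul trmxK.
move=> x; have -> : x^T *m (Y *m Y^T) *m x = (Y^T *m x)^T *m (Y^T *m x).
  by rewrite trmx_mul trmxK !mulmxA.
by rewrite mxE; apply: sumr_ge0 => i _; rewrite mxE -expr2 sqr_ge0.
Qed.

Lemma psdD k (M N : 'M[R]_k) : psd M -> psd N -> psd (M + N).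
Proof.
move=> [M_sym M_ge0] [N_sym N_ge0]; split; first by rewrite raddfD /= M_sym N_sym.
by move=> x; rewrite mulmxDr mulmxDl mxE addr_ge0.
Qed.

Lemma psdZ k (a : R) (M : 'M[R]_k) : 0 <= a -> psd M -> psd (a *: M).
Proof.
move=> a_ge0 [M_sym M_ge0]; split; first by rewrite linearZ /= M_sym.
by move=> x; rewrite -scalemxAr -scalemxAl mxE mulr_ge0.
Qed.

Lemma pd_psd k (M : 'M[R]_k) : pd M -> psd M.
Proof.
move=> [M_sym M_gt0]; split=> // x; have [->|x_neq0] := eqVneq x 0.
  by rewrite mulmx0 mxE.
exact/ltW/M_gt0.
Qed.

Lemma pdD_psd k (M N : 'M[R]_k) : pd M -> psd N -> pd (M + N).
Proof.
move=> [M_sym M_gt0] [N_sym N_ge0]; split; first by rewrite raddfD /= M_sym N_sym.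
move=> x x_neq0; rewrite mulmxDr mulmxDl mxE.
by have := M_gt0 x x_neq0; have := N_ge0 x; lra.
Qed.

Lemma pd_unitmx k (M : 'M[R]_k) : pd M -> M \in unitmx.
Proof.
move=> [_ M_gt0]; rewrite -row_free_unit -kermx_eq0.
apply/rowV0P => v /sub_kermxP vM; apply/eqP/negPn/negP => v_neq0.
have := M_gt0 v^T; rewrite trmx_eq0 => /(_ v_neq0).
by rewrite trmxK vM mul0mx mxE ltxx.
Qed.

Lemma psd_block_diag k l (Q : 'M[R]_k) (Rm : 'M[R]_l) :
  psd Q -> psd Rm -> psd (block_mx Q 0 0 Rm).
Proof.
move=> Q_psd R_psd.
have -> : block_mx Q 0 0 Rm = (row_mx 1%:M 0)^T *m Q *m row_mx 1%:M 0
                            + (row_mx 0 1%:M)^T *m Rm *m row_mx 0 1%:M.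
  rewrite !tr_row_mx !trmx1 !trmx0 !mul_col_mx !mul1mx !mul0mx.
  by rewrite !mul_mx_row !mulmx1 !mulmx0 add_col_mx addr0 add0r.
by apply: psdD; apply: psd_conj.
Qed.

End Definite.

Lemma sum_nat_pick (V : nmodType) (a b j : nat) (x : nat -> V) :
  \sum_(a <= k < b) (if k == j then x k else 0) = if (a <= j < b)%N then x j else 0.
Proof. by rewrite -big_mkcond big_nat1_eq. Qed.

Lemma sum_nat_upd (V : zmodType) (a b j : nat) (f g : nat -> V) :
  (a <= j < b)%N -> (forall k, k != j -> g k = f k) ->
  \sum_(a <= k < b) g k = \sum_(a <= k < b) f k + (g j - f j).
Proof.
move=> j_in gf.
have -> : g j - f j = \sum_(a <= k < b) (if k == j then g k - f k else 0).
  by rewrite sum_nat_pick j_in.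
rewrite -big_split /=; apply: eq_bigr => k _.
by case: eqVneq => [->|/gf->]; rewrite ?addr0 // addrC subrK.
Qed.

Section Feedback.
Variables (R : realType) (n m : nat).
Implicit Type F : 'M[R]_(m, n).

Lemma trmx_IF F : (IF F)^T = row_mx 1%:M F^T.
Proof. by rewrite /IF tr_col_mx trmx1. Qed.

Lemma IF_block_IF (P11 : 'M[R]_n) P12 P21 (P22 : 'M[R]_m) F :
  (IF F)^T *m block_mx P11 P12 P21 P22 *m IF F
  = P11 + F^T *m P21 + (P12 + F^T *m P22) *m F.
Proof. by rewrite trmx_IF mul_row_block !mul1mx /IF mul_row_col mulmx1. Qed.

Lemma rsub_IF_block (P11 : 'M[R]_n) P12 P21 (P22 : 'M[R]_m) F :
  rsubmx ((IF F)^T *m block_mx P11 P12 P21 P22) = P12 + F^T *m P22.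
Proof. by rewrite trmx_IF mul_row_block row_mxKr mul1mx. Qed.

Lemma IF_add F E (t : R) : IF (F + t *: E) = IF F + t *: col_mx 0 E.
Proof. by rewrite /IF scale_col_mx scaler0 add_col_mx addr0. Qed.

Lemma mxtrace_IF_add (M : 'M[R]_n) (P : 'M[R]_(n + m)) F E (t : R) :
  M^T = M -> P^T = P ->
  \tr (IF (F + t *: E) *m M *m (IF (F + t *: E))^T *m P)
  = \tr (IF F *m M *m (IF F)^T *m P)
    + t * (2 * \tr (M *m rsubmx ((IF F)^T *m P) *m E))
    + t ^+ 2 * \tr (col_mx 0 E *m M *m (col_mx 0 E)^T *m P).
Proof.
move=> M_sym P_sym; rewrite IF_add; set I := IF F; set K := col_mx 0 E.
have cross : \tr (I *m M *m K^T *m P) = \tr (K *m M *m I^T *m P).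
  rewrite -mxtrace_tr !trmx_mul !trmxK M_sym P_sym mxtrace_mulC.
  by rewrite !mulmxA.
have cross_rsub : \tr (K *m M *m I^T *m P) = \tr (M *m rsubmx (I^T *m P) *m E).
  rewrite -!mulmxA mxtrace_mulC -{1}[I^T *m P]hsubmxK mul_mx_row /K.
  by rewrite mul_row_col mulmx0 add0r mulmxA.
rewrite linearD linearZ /= !(mulmxDl, mulmxDr) -!(scalemxAl, scalemxAr).
rewrite !mxtraceD !mxtraceZ cross cross_rsub.
ring.
Qed.

End Feedback.

Section CovarianceSelection.
Variables (R : realType) (n m : nat) (p : problem R n m).
Local Notation A := (pA p).
Local Notation B := (pB p).
Implicit Types (S P : nat -> 'M[R]_(n + m)) (F : nat -> 'M[R]_(m, n)).

Definition Qlam (lam : R) k := pQ p k + lam *: pQt p k.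
Definition Rlam (lam : R) k := pR p k + lam *: pRt p k.
(* At X = X_(k+1)^lam, Fopt and Popt are the paper's F_k^lam and P_k^lam. *)
Definition Rbar lam k (X : 'M[R]_n) := Rlam lam k + B^T *m X *m B.
Definition Fopt lam k X : 'M[R]_(m, n) := - (invmx (Rbar lam k X) *m B^T *m X *m A).
Definition Popt lam k X : 'M[R]_(n + m) :=
  block_mx (Qlam lam k + A^T *m X *m A) (A^T *m X *m B) (B^T *m X *m A) (Rbar lam k X).

Lemma Popt_split lam k X :
  Popt lam k X = bdiag (Qlam lam k) (Rlam lam k) + (AB p)^T *m X *m AB p.
Proof.
by rewrite /Popt /bdiag /AB tr_row_mx mul_col_mx mul_col_row add_block_mx !add0r.
Qed.

Section CompletingTheSquare.
Variables (lam : R) (k : nat) (X : 'M[R]_n).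
Hypotheses (X_sym : X^T = X) (Rbar_sym : (Rbar lam k X)^T = Rbar lam k X)
  (Rbar_unit : Rbar lam k X \in unitmx).

Lemma trmx_Fopt : (Fopt lam k X)^T = - (A^T *m X *m B *m invmx (Rbar lam k X)).
Proof. by rewrite raddfN /= !trmx_mul trmx_inv Rbar_sym X_sym trmxK !mulmxA. Qed.

Lemma rsub_IF_Popt_eq0 (F : 'M[R]_(m, n)) :
  rsubmx ((IF F)^T *m Popt lam k X) = 0 <-> F = Fopt lam k X.
Proof.
rewrite rsub_IF_block; split=> [FRbar | ->]; last first.
  by rewrite trmx_Fopt mulNmx -[_ *m invmx _ *m _]mulmxA mulVmx // mulmx1 addrN.
have RbarF : Rbar lam k X *m F = - (B^T *m X *m A).
  apply/eqP; rewrite -subr_eq0 opprK addrC.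
  have := congr1 trmx FRbar; rewrite raddfD /= !trmx_mul !trmxK X_sym Rbar_sym.
  by rewrite trmx0 mulmxA => ->.
by rewrite -[F](mulKmx Rbar_unit) RbarF /Fopt mulmxN !mulmxA.
Qed.

Lemma IF_Popt_IF_Fopt :
  (IF (Fopt lam k X))^T *m Popt lam k X *m IF (Fopt lam k X) = Ric_step p lam k X.
Proof.
have /rsub_IF_Popt_eq0 := erefl (Fopt lam k X).
rewrite /Popt IF_block_IF rsub_IF_block => ->; rewrite mul0mx addr0.
rewrite trmx_Fopt mulNmx /Ric_step /Qlam !mulmxA.
by rewrite -[RHS]addrA [RHS]addrC [RHS]addrA.
Qed.

End CompletingTheSquare.

Lemma Xlam_last lam : Xlam p lam (pN p) = pQf p + lam *: pQft p.
Proof. by rewrite /Xlam subnn. Qed.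

Lemma XlamS lam k : (k < pN p)%N -> Xlam p lam k = Ric_step p lam k (Xlam p lam k.+1).
Proof. by move=> k_lt; rewrite /Xlam -(subnSK k_lt) /= subnSK // subKn // ltnW. Qed.

(* E(x(j) x(j)^T) computed from S_(j-1); the constraints say
   S_j = [I;F_j] (state_cov S j) [I;F_j]^T. *)
Definition state_cov S j : 'M[R]_n :=
  if j is i.+1 then AB p *m S i *m (AB p)^T + pW p else pV p + pz p *m (pz p)^T.

Lemma traj_state_cov F k :
  traj p F k = IF (F k) *m state_cov (traj p F) k *m (IF (F k))^T.
Proof. by case: k. Qed.

Lemma traj_ext F F' k :
  (forall i, (i <= k)%N -> F i = F' i) -> traj p F k = traj p F' k.
Proof.
elim: k => [|k IH] eqFF' /=; first by rewrite eqFF'.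
by rewrite eqFF' // IH // => i /leqW; apply: eqFF'.
Qed.

Lemma feasible_traj S F : S 0%N = Sinit p (F 0%N) ->
  (forall k, (1 <= k < pN p)%N -> S k = Phi p (F k) (S k.-1)) ->
  forall k, (k < pN p)%N -> S k = traj p F k.
Proof.
move=> S0 SS; elim=> [|k IH] k_lt //=.
by rewrite SS ?k_lt //= IH // ltnW.
Qed.

Hypothesis N_gt0 : (0 < pN p)%N.

Lemma eq_Ccost S S' :
  (forall k, (k < pN p)%N -> S k = S' k) -> Ccost p S = Ccost p S'.
Proof.
move=> eqSS'; rewrite /Ccost eqSS'; last by rewrite prednK.
by congr (_ + _); apply: eq_bigr => i _; rewrite eqSS'.
Qed.

Section Lagrangian.
Variables (lam : R) (P : nat -> 'M[R]_(n + m)).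

Definition residual S F k : 'M[R]_(n + m) :=
  IF (F k) *m state_cov S k *m (IF (F k))^T - S k.

Definition quad_cost (Xf : 'M[R]_n) (Qs : nat -> 'M[R]_n) (Rs : nat -> 'M[R]_m) S :=
  \tr (Xf *m (AB p *m S (pN p).-1 *m (AB p)^T + pW p))
  + \sum_(k < pN p) \tr (bdiag (Qs k) (Rs k) *m S k).

(* The X_(j+1) implied by the multipliers. *)
Definition costtogo F j : 'M[R]_n :=
  if (j.+1 < pN p)%N then (IF (F j.+1))^T *m P j.+1 *m IF (F j.+1)
  else pQf p + lam *: pQft p.

Lemma JpE S : Jp p S = quad_cost (pQf p) (pQ p) (pR p) S.
Proof. by []. Qed.

Lemma CcostE S : Ccost p S = quad_cost (pQft p) (pQt p) (pRt p) S.
Proof. by []. Qed.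

Lemma LagrE S F : Lagr p lam P S F =
  Jp p S + \sum_(0 <= k < pN p) \tr (residual S F k *m P k)
  + lam * (Ccost p S - pgamma p).
Proof.
rewrite /Lagr (big_ltn N_gt0).
have -> : \sum_(1 <= k < pN p) \tr ((Phi p (F k) (S k.-1) - S k) *m P k)
        = \sum_(1 <= k < pN p) \tr (residual S F k *m P k).
  by apply: eq_big_nat => -[].
rewrite /residual /Sinit /=; ring.
Qed.

Lemma updE S j D t k :
  upd S j (S j + t *: D) k = S k + (if k == j then t *: D else 0).
Proof. by rewrite /upd; case: eqP => [->|]; rewrite ?addr0. Qed.

Lemma mxtrace_mul_upd (X : 'M[R]_(n + m)) S j D t k :
  \tr (X *m upd S j (S j + t *: D) k)
  = \tr (X *m S k) + (if k == j then t * \tr (X *m D) else 0).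
Proof.
rewrite updE mulmxDr mxtraceD; case: eqP => _; last by rewrite mulmx0 mxtrace0.
by rewrite -scalemxAr mxtraceZ.
Qed.

Lemma quad_cost_upd Xf Qs Rs S j D t : (j < pN p)%N ->
  quad_cost Xf Qs Rs (upd S j (S j + t *: D)) = quad_cost Xf Qs Rs S
  + t * \tr (bdiag (Qs j) (Rs j) *m D)
  + (if (j.+1 < pN p)%N then 0 else t * \tr (Xf *m (AB p *m D *m (AB p)^T))).
Proof.
move=> j_lt; rewrite /quad_cost.
under eq_bigr => k _ do rewrite mxtrace_mul_upd.
rewrite big_split /= -big_mkcond.
rewrite (big_ord1_eq _ (fun k => t * \tr (bdiag (Qs k) (Rs k) *m D))) j_lt updE.
case: ltnP => [j1_lt | j1_ge].
  by rewrite ifN ?addr0 ?addrA //; apply/eqP; lia.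
rewrite ifT; last by apply/eqP; lia.
rewrite [AB p *m _]mulmxDr mulmxDl -scalemxAr -scalemxAl addrAC.
by rewrite [Xf *m (_ + t *: _)]mulmxDr mxtraceD -scalemxAr mxtraceZ; ring.
Qed.

Lemma state_cov_upd S j D t k :
  state_cov (upd S j (S j + t *: D)) k
  = state_cov S k + (if k == j.+1 then t *: (AB p *m D *m (AB p)^T) else 0).
Proof.
case: k => [|k] /=; first by rewrite addr0.
rewrite updE eqSS; case: eqP => _; last by rewrite !addr0.
by rewrite mulmxDr mulmxDl -scalemxAr -scalemxAl addrAC.
Qed.

Lemma mxtrace_residual_updS S F j D t k :
  \tr (residual (upd S j (S j + t *: D)) F k *m P k)
  = \tr (residual S F k *m P k)
    + (if k == j.+1
       then t * \tr (IF (F k) *m (AB p *m D *m (AB p)^T) *m (IF (F k))^T *m P k)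
       else 0)
    - (if k == j then t * \tr (D *m P k) else 0).
Proof.
rewrite /residual state_cov_upd updE.
have [->|_] := eqVneq k j.+1.
  rewrite (gtn_eqF (ltnSn j)) addr0 subr0 !(mulmxDl, mulmxDr, mulNmx, mxtraceD, mxtraceN).
  by rewrite -!scalemxAr -!scalemxAl !mxtraceZ; ring.
case: eqP => _; rewrite ?addr0 ?subr0 //.
by rewrite !(opprD, mulmxDl, mulNmx, mxtraceD, mxtraceN) -!scalemxAl !mxtraceZ; ring.
Qed.

Lemma bdiag_lam j : bdiag (Qlam lam j) (Rlam lam j)
  = bdiag (pQ p j) (pR p j) + lam *: bdiag (pQt p j) (pRt p j).
Proof. by rewrite /bdiag scale_block_mx !scaler0 add_block_mx !add0r. Qed.

Lemma mxtrace_Popt_mul j X D :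
  \tr (Popt lam j X *m D) = \tr (bdiag (pQ p j) (pR p j) *m D)
  + lam * \tr (bdiag (pQt p j) (pRt p j) *m D) + \tr (X *m (AB p *m D *m (AB p)^T)).
Proof.
by rewrite Popt_split bdiag_lam !mulmxDl !mxtraceD -scalemxAl mxtraceZ mxtrace_mul_conj.
Qed.

Lemma Lagr_updS S F j D t : (j < pN p)%N ->
  Lagr p lam P (upd S j (S j + t *: D)) F
  = Lagr p lam P S F + t * \tr ((Popt lam j (costtogo F j) - P j) *m D).
Proof.
move=> j_lt; rewrite !LagrE !JpE !CcostE !quad_cost_upd //.
under eq_big_nat => k _ do rewrite mxtrace_residual_updS.
rewrite sumrB big_split /= !sum_nat_pick j_lt /=.
rewrite mulmxBl mxtraceD mxtraceN mxtrace_Popt_mul (mxtrace_mulC (P j)) /costtogo.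
case: ifP => _.
  by rewrite mxtrace_mul_conj [\tr (P j.+1 *m _)]mxtrace_mulC; ring.
by rewrite mulmxDl mxtraceD -scalemxAl mxtraceZ; ring.
Qed.

Lemma Lagr_updF S F j E t : (j < pN p)%N ->
  (P j)^T = P j -> (state_cov S j)^T = state_cov S j ->
  Lagr p lam P S (upd F j (F j + t *: E)) = Lagr p lam P S F
    + t * (2 * \tr (state_cov S j *m rsubmx ((IF (F j))^T *m P j) *m E))
    + t ^+ 2 * \tr (col_mx 0 E *m state_cov S j *m (col_mx 0 E)^T *m P j).
Proof.
move=> j_lt P_sym cov_sym; rewrite !LagrE.
rewrite (sum_nat_upd (f := fun k => \tr (residual S F k *m P k)) (j := j)) //; last first.
  by move=> k k_neq; rewrite /residual /upd (negbTE k_neq).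
by rewrite /residual /upd eqxx !mulmxBl !mxtraceD !mxtraceN mxtrace_IF_add //; ring.
Qed.

Lemma stationary_S_iff S F j : (j < pN p)%N ->
  Defs.symmetric (Popt lam j (costtogo F j) - P j) ->
  (forall D, Defs.symmetric D -> is_derive (0 : R) (1 : R)
     (fun t : R => Lagr p lam P (upd S j (S j + t *: D)) F) 0)
  <-> P j = Popt lam j (costtogo F j).
Proof.
move=> j_lt G_sym; set G := _ - P j in G_sym *.
have stat_iff D : is_derive (0 : R) (1 : R)
    (fun t : R => Lagr p lam P (upd S j (S j + t *: D)) F) 0 <-> \tr (G *m D) = 0.
  by apply: (is_derive0_quadratic (c := 0)) => t; rewrite Lagr_updS // mulr0 addr0.
split=> [/(_ G G_sym)/stat_iff | PjE D _]; last first.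
  by apply/stat_iff; rewrite /G PjE subrr mul0mx mxtrace0.
rewrite -{2}[G]G_sym => /mxtrace_mul_tr_eq0/eqP.
by rewrite subr_eq0 => /eqP.
Qed.

Lemma stationary_F_iff S F j : (j < pN p)%N -> (P j)^T = P j -> pd (state_cov S j) ->
  (forall E, is_derive (0 : R) (1 : R)
     (fun t : R => Lagr p lam P S (upd F j (F j + t *: E))) 0)
  <-> rsubmx ((IF (F j))^T *m P j) = 0.
Proof.
move=> j_lt P_sym cov_pd; set M := state_cov S j; set Y := rsubmx _.
have stat_iff E : is_derive (0 : R) (1 : R)
    (fun t : R => Lagr p lam P S (upd F j (F j + t *: E))) 0
    <-> 2 * \tr (M *m Y *m E) = 0.
  by apply: is_derive0_quadratic => t; rewrite Lagr_updF // cov_pd.1.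
split=> [/(_ (M *m Y)^T)/stat_iff | Y0 E]; last first.
  by apply/stat_iff; rewrite Y0 mulmx0 mul0mx mxtrace0 mulr0.
move/eqP; rewrite mulf_eq0 pnatr_eq0 /= => /eqP/mxtrace_mul_tr_eq0 MY0.
by rewrite -[Y](mulKmx (pd_unitmx cov_pd)) MY0 mulmx0.
Qed.

End Lagrangian.

Hypotheses (Qf_psd : psd (pQf p)) (Qft_psd : psd (pQft p))
  (Q_psd : forall k, psd (pQ p k)) (Qt_psd : forall k, psd (pQt p k))
  (Rlam_pd : forall k (lam : R), 0 <= lam -> pd (pR p k + lam *: pRt p k))
  (V_pd : pd (pV p)) (W_pd : pd (pW p)).

Lemma state_cov_pd S j : (forall i, (i < j)%N -> psd (S i)) -> pd (state_cov S j).
Proof.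
case: j => [_ | i S_psd] /=; first exact/pdD_psd/psd_mul_tr.
by rewrite addrC; apply: pdD_psd => //; apply/psd_conjT/S_psd.
Qed.

Lemma traj_psd F k : psd (traj p F k).
Proof.
elim/ltn_ind: k => k IH; rewrite traj_state_cov.
exact/psd_conjT/pd_psd/state_cov_pd.
Qed.

Lemma KKT_state_cov_pd lam S F P j :
  KKT p lam S F P -> (j < pN p)%N -> pd (state_cov S j).
Proof.
move=> [_ [S0 [SS _]]] j_lt; apply: state_cov_pd => i i_lt.
by rewrite (feasible_traj S0 SS); [exact: traj_psd | exact: ltn_trans i_lt j_lt].
Qed.

Section Multipliers.
Variable lam : R.
Hypothesis lam_ge0 : 0 <= lam.

Lemma Qlam_psd k : psd (Qlam lam k).
Proof. exact/psdD/psdZ. Qed.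

Lemma Rbar_pd k (X : 'M[R]_n) : psd X -> pd (Rbar lam k X).
Proof. by move=> X_psd; apply: pdD_psd; [exact: Rlam_pd | exact: psd_conj]. Qed.

Lemma Popt_psd k X : psd X -> psd (Popt lam k X).
Proof.
move=> X_psd; rewrite Popt_split; apply: psdD; last exact: psd_conj.
by apply: psd_block_diag; [exact: Qlam_psd | exact/pd_psd/Rlam_pd].
Qed.

Lemma Ric_step_psd k X : psd X -> psd (Ric_step p lam k X).
Proof.
move=> X_psd; have Rbar_pdX := Rbar_pd k X_psd.
rewrite -(IF_Popt_IF_Fopt X_psd.1 Rbar_pdX.1 (pd_unitmx Rbar_pdX)).
exact/psd_conj/Popt_psd.
Qed.

Lemma Xlam_psd k : psd (Xlam p lam k).
Proof.
rewrite /Xlam; elim: (pN p - k)%N => [|i IH] /=; last exact: Ric_step_psd.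
exact/psdD/psdZ.
Qed.

Lemma PlamE k : Plam p lam k = Popt lam k (Xlam p lam k.+1).
Proof. by []. Qed.

Lemma Plam_psd k : psd (Plam p lam k).
Proof. exact/Popt_psd/Xlam_psd. Qed.

Lemma rsub_IF_Plam_eq0 k (F : 'M[R]_(m, n)) :
  rsubmx ((IF F)^T *m Plam p lam k) = 0 <-> F = Flam p lam k.
Proof.
have Rbar_pdk := Rbar_pd k (Xlam_psd k.+1).
exact: (rsub_IF_Popt_eq0 (Xlam_psd k.+1).1 Rbar_pdk.1 (pd_unitmx Rbar_pdk)).
Qed.

Lemma IF_Plam_IF k : (k < pN p)%N ->
  (IF (Flam p lam k))^T *m Plam p lam k *m IF (Flam p lam k) = Xlam p lam k.
Proof.
move=> k_lt; have Rbar_pdk := Rbar_pd k (Xlam_psd k.+1).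
rewrite XlamS //.
exact: (IF_Popt_IF_Fopt (Xlam_psd k.+1).1 Rbar_pdk.1 (pd_unitmx Rbar_pdk)).
Qed.

Lemma costtogo_lam P F j : (j < pN p)%N ->
  ((j.+1 < pN p)%N -> P j.+1 = Plam p lam j.+1 /\ F j.+1 = Flam p lam j.+1) ->
  costtogo lam P F j = Xlam p lam j.+1.
Proof.
move=> j_lt next; rewrite /costtogo; case: ltnP => [j1_lt | j1_ge].
  by have [-> ->] := next j1_lt; rewrite IF_Plam_IF.
have -> : j.+1 = pN p by lia.
by rewrite Xlam_last.
Qed.

Lemma KKT_step S F P j : KKT p lam S F P -> (j < pN p)%N ->
  ((j.+1 < pN p)%N -> P j.+1 = Plam p lam j.+1 /\ F j.+1 = Flam p lam j.+1) ->
  P j = Plam p lam j /\ F j = Flam p lam j.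
Proof.
move=> kkt j_lt next; have cov_pd := KKT_state_cov_pd kkt j_lt.
case: kkt => [sym [_ [_ [_ [_ [_ [statS statF]]]]]]].
have costtogoE := costtogo_lam j_lt next.
have Pj : P j = Plam p lam j.
  have G_sym : Defs.symmetric (Popt lam j (costtogo lam P F j) - P j).
    by rewrite costtogoE /Defs.symmetric raddfB /= (Plam_psd j).1 (sym j j_lt).2.
  by rewrite PlamE -costtogoE; apply/(stationary_S_iff S j_lt G_sym)/statS.
have Y0 := (stationary_F_iff lam F j_lt (sym j j_lt).2 cov_pd).1 (statF j j_lt).
by split=> //; apply/rsub_IF_Plam_eq0; rewrite -Pj.
Qed.

Lemma KKT_multipliers S F P : KKT p lam S F P ->
  forall j, (j < pN p)%N -> P j = Plam p lam j /\ F j = Flam p lam j.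
Proof.
move=> kkt j; move Ed : (pN p - j)%N => d.
elim: d j Ed => [|d IH] j Ed j_lt; first lia.
by apply: (KKT_step kkt) => // j1_lt; apply: IH; lia.
Qed.

End Multipliers.

Hypothesis nontrivial : pgamma p < Ccost p (Slam p 0).

Lemma KKT_solution lam S F P : KKT p lam S F P ->
  0 < lam /\ Ccost p (Slam p lam) = pgamma p /\
  forall k, (k < pN p)%N ->
    S k = Slam p lam k /\ F k = Flam p lam k /\ P k = Plam p lam k.
Proof.
move=> kkt; have lam_ge0 : 0 <= lam by case: kkt => [_ [_ [_ [_ [_ []]]]]].
have PF := KKT_multipliers lam_ge0 kkt.
have SE k : (k < pN p)%N -> S k = Slam p lam k.
  move=> k_lt; case: kkt => [_ [S0 [SS _]]].
  rewrite (feasible_traj S0 SS k_lt); apply: traj_ext => i i_le.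
  exact: (PF i (leq_ltn_trans i_le k_lt)).2.
have CE : Ccost p S = Ccost p (Slam p lam) := eq_Ccost SE.
case: kkt => [_ [_ [_ [feas [slack _]]]]].
have lam_gt0 : 0 < lam.
  rewrite lt_neqAle lam_ge0 andbT; apply/eqP => lam0.
  by move: feas; rewrite CE -lam0 leNgt nontrivial.
split=> //; split.
  by move/eqP: slack; rewrite mulf_eq0 gt_eqF //= subr_eq0 CE => /eqP.
by move=> k k_lt; have [-> ->] := PF k k_lt; rewrite SE.
Qed.

Lemma solution_KKT lam S F P : 0 < lam -> Ccost p (Slam p lam) = pgamma p ->
  (forall k, (k < pN p)%N ->
    S k = Slam p lam k /\ F k = Flam p lam k /\ P k = Plam p lam k) ->
  KKT p lam S F P.
Proof.
move=> lam_gt0 Cgamma sol; have lam_ge0 := ltW lam_gt0.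
have SE k (k_lt : (k < pN p)%N) : S k = Slam p lam k by have [] := sol k k_lt.
have FE k (k_lt : (k < pN p)%N) : F k = Flam p lam k by have [_ []] := sol k k_lt.
have PE k (k_lt : (k < pN p)%N) : P k = Plam p lam k by have [_ []] := sol k k_lt.
have CS : Ccost p S = pgamma p by rewrite (eq_Ccost SE).
have costtogoE j : (j < pN p)%N -> costtogo lam P F j = Xlam p lam j.+1.
  by move=> j_lt; apply: costtogo_lam => // j1_lt; rewrite FE ?PE.
have cov_pd j : (j < pN p)%N -> pd (state_cov S j).
  move=> j_lt; apply: state_cov_pd => i i_lt.
  by rewrite SE; [exact: traj_psd | exact: ltn_trans i_lt j_lt].
have P_sym j : (j < pN p)%N -> (P j)^T = P j.
  by move=> j_lt; rewrite PE //; exact: (Plam_psd lam_ge0 j).1.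
split.
  move=> k k_lt; split; last exact: P_sym.
  by rewrite SE //; exact: (traj_psd _ _).1.
split; first by rewrite SE ?FE.
split; first by move=> -[|k] // /andP[_ k_lt]; rewrite SE // FE // SE // ltnW.
split; first by rewrite CS.
split; first by rewrite CS subrr mulr0.
split=> //; split=> j j_lt.
  have G0 : Popt lam j (costtogo lam P F j) - P j = 0.
    by rewrite costtogoE // PE // subrr.
  have G_sym : Defs.symmetric (Popt lam j (costtogo lam P F j) - P j).
    by rewrite /Defs.symmetric G0 trmx0.
  by apply/(stationary_S_iff S j_lt G_sym); rewrite costtogoE // PE.
apply/(stationary_F_iff lam F j_lt (P_sym j j_lt) (cov_pd j j_lt)).
by rewrite PE //; apply/(rsub_IF_Plam_eq0 lam_ge0); rewrite FE.
Qed.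

End CovarianceSelection.

Theorem proposition4 (R : realType) (n m : nat) (p : problem R n m) :
  (0 < pN p)%N ->
  psd (pQf p) -> psd (pQft p) ->
  (forall k, psd (pQ p k)) -> (forall k, psd (pQt p k)) ->
  (forall k (lam : R), 0 <= lam -> pd (pR p k + lam *: pRt p k)) ->
  pd (pV p) -> pd (pW p) ->
  (* strict feasibility of the constraint *)
  (exists F : nat -> 'M[R]_(m, n), Ccost p (traj p F) < pgamma p) ->
  (* nontrivial scenario *)
  Ccost p (Slam p 0) > pgamma p ->
  forall (lam : R) (S : nat -> 'M[R]_(n + m)) (F : nat -> 'M[R]_(m, n))
         (P : nat -> 'M[R]_(n + m)),
    KKT p lam S F P <->
    (0 < lam /\ Ccost p (Slam p lam) = pgamma p /\
     forall k, (k < pN p)%N ->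
       S k = Slam p lam k /\ F k = Flam p lam k /\ P k = Plam p lam k).
Proof.
(* Strict feasibility makes the KKT conditions necessary for optimality; the
   description of the KKT points themselves does not need it. *)
move=> N_gt0 Qf_psd Qft_psd Q_psd Qt_psd Rlam_pd V_pd W_pd _ nontrivial lam S F P.
split; first exact: KKT_solution.
by case=> lam_gt0 [Cgamma sol]; apply: solution_KKT.
Qed.
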